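(* For every ideal $I\subset\mathbb{C}[\mathrm{GL}_n]$, the matrix amoeba $\mathrm{s}\mathcal{A}(I)$ is closed in $\mathbb{R}^n/\mathcal{S}_n$.
   Context: $\mathbb{C}[\mathrm{GL}_n]$ is the ring of regular functions on $\mathrm{GL}_n(\mathbb{C})$. $\mathcal{S}_n$ acts on $\mathbb{R}^n$ by permuting coordinates; $\mathbb{R}^n/\mathcal{S}_n$ carries the metric $d(x,y) = \min_{\sigma\in\mathcal{S}_n}|\sigma\cdot x - y|$. $\mathrm{sLog}:\mathrm{GL}_n(\mathbb{C})\to\mathbb{R}^n/\mathcal{S}_n$ sends $A$ to $(\ln\lambda_1,\dots,\ln\lambda_n)$ where $\lambda_1,\dots,\lambda_n$ are the singular values of $A$. $\mathrm{s}\mathcal{A}(I) = \mathrm{sLog}(V(I))$ with $V(I) = \{A\in\mathrm{GL}_n(\mathbb{C}) : f(A) = 0\ \forall f\in I\}$. *)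

From HB Require Import structures.
From mathcomp Require Import all_boot all_order all_algebra all_fingroup.
From mathcomp Require Import complex.
From mathcomp Require Import all_classical all_reals all_analysis.
Set Implicit Arguments. Unset Strict Implicit. Unset Printing Implicit Defensive.
Import Order.TTheory GRing.Theory Num.Theory.
Local Open Scope ring_scope.

Section Defs.
Variable R : realType.
Variable n : nat.
Local Notation C := (R[i]).

Inductive poly_fun : ('M[C]_n -> C) -> Prop :=
  | pf_const (c : C) : poly_fun (fun _ => c)
  | pf_coord (i j : 'I_n) : poly_fun (fun A => A i j)
  | pf_add f g : poly_fun f -> poly_fun g -> poly_fun (fun A => f A + g A)
  | pf_mul f g : poly_fun f -> poly_fun g -> poly_fun (fun A => f A * g A).

(* Regular functions on GL_n(C): C[GL_n] = C[x_ij, det^-1]; f is regular iff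
   on GL_n it equals p / det^k for a polynomial p.  Only values on GL_n matter. *)
Definition regular (f : 'M[C]_n -> C) : Prop :=
  exists (p : 'M[C]_n -> C) (k : nat), poly_fun p /\
    forall A : 'M[C]_n, A \in unitmx -> f A = p A / (\det A) ^+ k.

Definition is_ideal (I : set ('M[C]_n -> C)) : Prop :=
  [/\ (forall f, I f -> regular f),
      I (fun _ => 0),
      (forall f g, I f -> I g -> I (fun A => f A + g A)) &
      (forall f g, regular g -> I f -> I (fun A => g A * f A))].

Definition zero_locus (I : set ('M[C]_n -> C)) : set 'M[C]_n :=
  [set A | A \in unitmx /\ forall f, I f -> f A = 0].

Definition adjoint (A : 'M[C]_n) : 'M[C]_n := (map_mx Num.conj A)^T.

(* s lists the singular values of A (with multiplicity, in some order):
   s_i >= 0 and the s_i^2 are the eigenvalues of A^* A (char. polynomial). *)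
Definition singular_values (A : 'M[C]_n) (s : 'rV[R]_n) : Prop :=
  (forall i, 0 <= s ord0 i) /\
  char_poly (adjoint A *m A) = \prod_(i < n) ('X - ((s ord0 i ^+ 2)%:C)%C%:P).

(* x is a representative in R^n of sLog(A) in R^n/S_n. *)
Definition sLog_rep (A : 'M[C]_n) (x : 'rV[R]_n) : Prop :=
  exists s, singular_values A s /\ forall i, x ord0 i = ln (s ord0 i).

(* Preimage in R^n of the matrix amoeba sA(I) = sLog(V(I)) (an S_n-invariant set). *)
Definition matrix_amoeba (I : set ('M[C]_n -> C)) : set 'rV[R]_n :=
  [set x | exists A, zero_locus I A /\ sLog_rep A x].

Definition perm_act (s : 'S_n) (x : 'rV[R]_n) : 'rV[R]_n := \row_i x ord0 (s i).

Definition eucl_norm (v : 'rV[R]_n) : R := Num.sqrt (\sum_(i < n) v ord0 i ^+ 2).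

Definition quot_dist (x y : 'rV[R]_n) : R :=
  \big[Num.min/eucl_norm (x - y)]_(s : 'S_n) eucl_norm (perm_act s x - y).

(* A subset of R^n/S_n, given by its (S_n-invariant) preimage S in R^n, is closed
   for the metric d: every point in its closure belongs to it. *)
Definition quot_closed (S : set 'rV[R]_n) : Prop :=
  forall x, (forall e : R, 0 < e -> exists y, S y /\ quot_dist x y < e) -> S x.

End Defs.

From HB Require Import structures.
From mathcomp Require Import all_boot all_order all_algebra all_fingroup.
From mathcomp Require Import complex.
From mathcomp Require Import all_classical all_reals all_analysis.
From mathcomp Require Import lra.
Import Order.TTheory GRing.Theory Num.Theory.
Import numFieldNormedType.Exports.

Set Implicit Arguments.
Unset Strict Implicit.
Unset Printing Implicit Defensive.

Local Open Scope ring_scope.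
Local Open Scope classical_set_scope.

(* Let x be in the closure of the amoeba.  Up to reordering, there are matrices
   A_e in V(I) with singular values s_e such that |ln s_e - x| <= e.  The sum
   of the squared singular values is the squared Frobenius norm, so the pairs
   (A_e, s_e) stay in a compact box and have a cluster point (A, s).  The
   conditions "s lists the singular values of A" and "the numerator p of every
   f = p / det^k in I vanishes at A" are closed, so they pass to the limit,
   together with ln s = x.  Since all s_i > 0, A is invertible, hence A lies in
   V(I) and sLog(A) = x. *)

Lemma nested_closed_compact_nonempty (R : realDomainType) (T : topologicalType)
    (W : R -> set T) :
  (forall e, 0 < e -> W e !=set0) ->
  (forall e e', 0 < e <= e' -> W e `<=` W e') ->
  (forall e, 0 < e -> closed (W e)) -> compact (W 1) ->
  exists t, forall e, 0 < e -> W e t.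
Proof.
move=> W_neq0 W_mono W_closed W1_compact.
pose F := filter_from [set e : R | 0 < e] W.
have F_filter : ProperFilter F.
  apply: filter_from_proper; last exact: W_neq0.
  apply: filter_from_filter; first by exists 1; rewrite /= ltr01.
  move=> a b a0 b0; exists (Order.min a b); first by rewrite /= lt_min a0 b0.
  by move=> t Wt; split; apply: W_mono Wt; rewrite lt_min a0 b0 ge_min lexx ?orbT.
have [|t [_ Ft]] := W1_compact F F_filter; first by exists 1; rewrite /= ?ltr01.
exists t => e e0; rewrite (closure_id (W e)).1; last exact: W_closed.
by move: Ft; rewrite clusterE; apply; exists e.
Qed.

Section continuous_ReIm.
Variables (R : realType) (T : topologicalType).
Local Open Scope complex_scope.

(* The library puts no topology on [R[i]]; continuity of complex-valued maps is
   expressed through their real and imaginary parts. *)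
Definition continuous_ReIm (f : T -> R[i]) :=
  continuous (fun t => complex.Re (f t)) /\ continuous (fun t => complex.Im (f t)).

Lemma continuous_ReIm_cst c : continuous_ReIm (fun _ => c).
Proof. by split; apply: cst_continuous. Qed.

Lemma continuous_ReIm_complex (a b : T -> R) :
  continuous a -> continuous b -> continuous_ReIm (fun t => a t +i* b t).
Proof. by split. Qed.

Lemma continuous_ReImD f g : continuous_ReIm f -> continuous_ReIm g ->
  continuous_ReIm (fun t => f t + g t).
Proof.
move=> [fRe fIm] [gRe gIm].
have -> : (fun t => f t + g t) = (fun t =>
    (complex.Re (f t) + complex.Re (g t)) +i* (complex.Im (f t) + complex.Im (g t))).
  by apply: funext => t; case: (f t) => ? ?; case: (g t).
by apply: continuous_ReIm_complex => t;
  [exact: continuousD (fRe t) (gRe t) | exact: continuousD (fIm t) (gIm t)].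
Qed.

Lemma continuous_ReImN f : continuous_ReIm f -> continuous_ReIm (fun t => - f t).
Proof.
move=> [fRe fIm].
have -> : (fun t => - f t) = (fun t => (- complex.Re (f t)) +i* (- complex.Im (f t))).
  by apply: funext => t; case: (f t).
by apply: continuous_ReIm_complex => t;
  [exact: continuousN (fRe t) | exact: continuousN (fIm t)].
Qed.

Lemma continuous_ReImM f g : continuous_ReIm f -> continuous_ReIm g ->
  continuous_ReIm (fun t => f t * g t).
Proof.
move=> [fRe fIm] [gRe gIm].
have -> : (fun t => f t * g t) = (fun t =>
    (complex.Re (f t) * complex.Re (g t) - complex.Im (f t) * complex.Im (g t)) +i*
    (complex.Re (f t) * complex.Im (g t) + complex.Im (f t) * complex.Re (g t))).
  by apply: funext => t; case: (f t) => ? ?; case: (g t).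
apply: continuous_ReIm_complex => t.
- exact: continuousB (continuousM (fRe t) (gRe t)) (continuousM (fIm t) (gIm t)).
- exact: continuousD (continuousM (fRe t) (gIm t)) (continuousM (fIm t) (gRe t)).
Qed.

Lemma continuous_ReImJ f : continuous_ReIm f ->
  continuous_ReIm (fun t => Num.conj (f t)).
Proof.
move=> [fRe fIm].
have -> : (fun t => Num.conj (f t)) = (fun t => complex.Re (f t) +i* (- complex.Im (f t))).
  by apply: funext => t; case: (f t).
by apply: continuous_ReIm_complex => // t; exact: continuousN (fIm t).
Qed.

Lemma continuous_ReIm_real (a : T -> R) : continuous a ->
  continuous_ReIm (fun t => (a t)%:C).
Proof. by move=> ca; apply: continuous_ReIm_complex => //; apply: cst_continuous. Qed.

Lemma continuous_ReIm_sum (J : Type) (r : seq J) (P : pred J) (F : J -> T -> R[i]) :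
  (forall j, continuous_ReIm (F j)) ->
  continuous_ReIm (fun t => \sum_(j <- r | P j) F j t).
Proof.
move=> cF; elim: r => [|j r IHr].
  by under eq_fun do rewrite big_nil; apply: continuous_ReIm_cst.
under eq_fun do rewrite big_cons.
by case: (P j) => //; apply: continuous_ReImD.
Qed.

Lemma continuous_ReIm_prod (J : Type) (r : seq J) (P : pred J) (F : J -> T -> R[i]) :
  (forall j, continuous_ReIm (F j)) ->
  continuous_ReIm (fun t => \prod_(j <- r | P j) F j t).
Proof.
move=> cF; elim: r => [|j r IHr].
  by under eq_fun do rewrite big_nil; apply: continuous_ReIm_cst.
under eq_fun do rewrite big_cons.
by case: (P j) => //; apply: continuous_ReImM.
Qed.

Lemma continuous_ReIm_det m (E : 'I_m -> 'I_m -> T -> R[i]) :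
  (forall i j, continuous_ReIm (E i j)) ->
  continuous_ReIm (fun t => \det (\matrix_(i, j) E i j t)).
Proof.
move=> cE; apply: continuous_ReIm_sum => s.
apply: continuous_ReImM; first exact: continuous_ReIm_cst.
apply: continuous_ReIm_prod => i.
by under eq_fun do rewrite mxE; apply: cE.
Qed.

Lemma closed_eq_ReIm f g : continuous_ReIm f -> continuous_ReIm g ->
  closed [set t | f t = g t].
Proof.
move=> [fRe fIm] [gRe gIm].
have -> : [set t | f t = g t] = [set t | complex.Re (f t) - complex.Re (g t) = 0]
                            `&` [set t | complex.Im (f t) - complex.Im (g t) = 0].
  apply/seteqP; split => t /=; first by move=> ->; rewrite !subrr.
  case: (f t) (g t) => [a b] [c d] /= [/eqP + /eqP].
  by rewrite !subr_eq0 => /eqP-> /eqP->.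
have closed_root (a : T -> R) : continuous a -> closed [set t | a t = 0].
  by move=> ca; exact: (continuous_closedP a).1 ca [set x : R | x = 0] (@closed_eq R 0).
by apply: closedI; apply: closed_root => t;
  [exact: continuousB (fRe t) (gRe t) | exact: continuousB (fIm t) (gIm t)].
Qed.

End continuous_ReIm.

Lemma poly_horner_ext (R : numDomainType) (p q : {poly R}) :
  (forall z, p.[z] = q.[z]) -> p = q.
Proof.
move=> pq; apply/eqP; rewrite -subr_eq0; apply/eqP.
apply: (@roots_geq_poly_eq0 _ _ [seq k%:R | k <- iota 0 (size (p - q))]).
- by apply/allP => z _; rewrite /root !hornerE pq subrr.
- by rewrite map_inj_uniq ?iota_uniq // => a b /eqP; rewrite eqr_nat => /eqP.
- by rewrite size_map size_iota.
Qed.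

Lemma horner_char_poly (R : comNzRingType) m (M : 'M[R]_m) z :
  (char_poly M).[z] = \det (z%:M - M).
Proof.
rewrite /char_poly -[_.[z]]/(horner_eval z _) -det_map_mx.
congr (\det _); apply/matrixP => i j; rewrite !mxE /= /horner_eval hornerD hornerN.
by rewrite hornerC hornerMn hornerX; case: (i == j).
Qed.

Section singular_values.
Variables (R : realType) (n : nat).
Local Open Scope complex_scope.
Implicit Types (A : 'M[R[i]]_n) (s : 'rV[R]_n).

Lemma det_adjoint A : \det (adjoint A) = Num.conj (\det A).
Proof. by rewrite /adjoint det_tr det_map_mx. Qed.

Lemma singular_values_perm A s (sg : 'S_n) : singular_values A s ->
  singular_values A (\row_i s ord0 (sg i)).
Proof.
move=> [s_ge0 charA]; split => [i|]; first by rewrite mxE.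
rewrite charA (reindex_inj (@perm_inj _ sg)) /=.
by apply: eq_bigr => i _; rewrite mxE.
Qed.

Lemma unitmx_singular_values A s : singular_values A s ->
  (A \in unitmx) = [forall i, s ord0 i != 0].
Proof.
move=> [_ charA].
have det0 : \det (- (adjoint A *m A)) = \prod_i (- ((s ord0 i ^+ 2)%:C)).
  rewrite -[- _]sub0r -(raddf0 (@scalar_mx _ n)) -horner_char_poly charA horner_prod.
  by apply: eq_bigr => i _; rewrite hornerXsubC sub0r.
have detAA : \det (- (adjoint A *m A)) = (-1) ^+ n * (Num.conj (\det A) * \det A).
  by rewrite -scaleN1r detZ det_mulmx det_adjoint.
have sv_eq0 i : (- ((s ord0 i ^+ 2)%:C) == 0) = (s ord0 i == 0).
  by rewrite oppr_eq0 fmorph_eq0 expf_eq0.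
rewrite unitmxE unitfE; apply/idP/forallP => [detA i|s_neq0].
  have : \prod_i (- ((s ord0 i ^+ 2)%:C)) != 0.
    rewrite -det0 detAA mulf_neq0 ?expf_neq0 ?oppr_eq0 ?oner_eq0 //.
    by rewrite mulf_neq0 ?conjC_eq0.
  by rewrite (bigD1 i) //= mulf_eq0 sv_eq0 negb_or => /andP[].
have : \det (- (adjoint A *m A)) != 0.
  by rewrite det0; apply/prodf_neq0 => i _; rewrite sv_eq0.
by rewrite detAA !mulf_eq0 !negb_or => /and3P[].
Qed.

Lemma singular_values_frobenius A s : singular_values A s ->
  \sum_i \sum_j (complex.Re (A i j) ^+ 2 + complex.Im (A i j) ^+ 2) =
  \sum_i s ord0 i ^+ 2.
Proof.
move=> [_ charA]; have [n0|n_gt0] := posnP n.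
  by rewrite !big1 // => i _; have := ltn_ord i; rewrite [X in (_ < X)%N]n0.
have trAA : \tr (adjoint A *m A) = \sum_i (s ord0 i ^+ 2)%:C.
  apply: oppr_inj; rewrite -char_poly_trace // charA.
  rewrite -(big_map (fun i => (s ord0 i ^+ 2)%:C) xpredT (fun c => 'X - c%:P)).
  have size_sv : size [seq (s ord0 i ^+ 2)%:C | i <- index_enum 'I_n] = n.
    by rewrite size_map /index_enum; unlock; rewrite -enumT size_enum_ord.
  have := @coefPn_prod_XsubC _ [seq (s ord0 i ^+ 2)%:C | i <- index_enum 'I_n].
  by rewrite size_sv -lt0n => /(_ n_gt0) ->; rewrite big_map.
have ReRe := raddf_sum (@complex.Re R : Rcomplex R -> R).
have /(congr1 (@complex.Re R)) := trAA; rewrite -rmorph_sum /= ReRe => <-.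
rewrite exchange_big; apply: eq_bigr => j _; rewrite mxE ReRe; apply: eq_bigr => i _.
by rewrite !mxE; case: (A i j) => a b /=; rewrite !expr2; lra.
Qed.

Lemma singular_values_entry_bound A s i j : singular_values A s ->
  complex.Re (A i j) ^+ 2 + complex.Im (A i j) ^+ 2 <= \sum_k s ord0 k ^+ 2.
Proof.
move=> svA; rewrite -(singular_values_frobenius svA) (bigD1 i) //= (bigD1 j) //=.
have sqr_norm_ge0 (z : R[i]) : 0 <= complex.Re z ^+ 2 + complex.Im z ^+ 2.
  by rewrite addr_ge0 ?sqr_ge0.
by rewrite -addrA lerDl addr_ge0 ?sumr_ge0 // => k _; rewrite sumr_ge0.
Qed.

End singular_values.

Section parameters.
Variables (R : realType) (n : nat).
Local Open Scope complex_scope.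

(* A pair (A, s) of a complex matrix and a real vector is a point of a product
   of real lines, one for each real or imaginary part of an entry of A and one
   for each coordinate of s, so that Tychonoff's theorem applies. *)
Definition param_index : eqType := ((('I_n * 'I_n) * bool) + 'I_n)%type.

Local Notation P := (prod_topology (fun _ : param_index => R)).

Definition param_mx (t : P) : 'M[R[i]]_n :=
  \matrix_(i, j) (t (inl (i, j, false)) +i* t (inl (i, j, true))).

Definition param_sv (t : P) : 'rV[R]_n := \row_i t (inr i).

Definition param (A : 'M[R[i]]_n) (s : 'rV[R]_n) : P := fun k =>
  match k with
  | inl (i, j, false) => complex.Re (A i j)
  | inl (i, j, true) => complex.Im (A i j)
  | inr i => s ord0 i
  end.

Lemma param_mxK A s : param_mx (param A s) = A.
Proof. by apply/matrixP => i j; rewrite mxE /=; case: (A i j). Qed.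

Lemma param_svK A s : param_sv (param A s) = s.
Proof. by apply/rowP => i; rewrite mxE. Qed.

Lemma continuous_param_sv i : continuous (fun t : P => param_sv t ord0 i).
Proof.
rewrite (_ : (fun t => _) = (fun t : P => t (inr i))); first exact: proj_continuous.
by apply: funext => t; rewrite mxE.
Qed.

Lemma continuous_ReIm_param_mx i j : continuous_ReIm (fun t : P => param_mx t i j).
Proof.
rewrite (_ : (fun t => _) = (fun t : P => t (inl (i, j, false)) +i* t (inl (i, j, true)))).
  by apply: continuous_ReIm_complex; apply: proj_continuous.
by apply: funext => t; rewrite mxE.
Qed.

Lemma continuous_ReIm_poly_fun p : poly_fun p ->
  continuous_ReIm (fun t : P => p (param_mx t)).
Proof.
elim=> [c|i j|f g _ cf _ cg|f g _ cf _ cg].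
- exact: continuous_ReIm_cst.
- exact: continuous_ReIm_param_mx.
- exact: continuous_ReImD.
- exact: continuous_ReImM.
Qed.

Lemma continuous_ReIm_char_poly_adjoint_mul z : continuous_ReIm (fun t : P =>
  (char_poly (adjoint (param_mx t) *m param_mx t)).[z]).
Proof.
have -> : (fun t : P => (char_poly (adjoint (param_mx t) *m param_mx t)).[z]) =
    (fun t => \det (\matrix_(i, j)
       (z%:M i j - \sum_k Num.conj (param_mx t k i) * param_mx t k j))).
  apply: funext => t; rewrite horner_char_poly; congr (\det _).
  apply/matrixP => i j; rewrite !mxE; congr (_ - _).
  by apply: eq_bigr => k _; rewrite !mxE.
apply: continuous_ReIm_det => i j; apply: continuous_ReImD.
  exact: continuous_ReIm_cst.
apply/continuous_ReImN/continuous_ReIm_sum => k.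
by apply: continuous_ReImM; [apply: continuous_ReImJ|];
  apply: continuous_ReIm_param_mx.
Qed.

Lemma closed_singular_values :
  closed [set t : P | singular_values (param_mx t) (param_sv t)].
Proof.
have -> : [set t : P | singular_values (param_mx t) (param_sv t)] =
    (\bigcap_i [set t | 0 <= param_sv t ord0 i]) `&`
    \bigcap_z [set t | (char_poly (adjoint (param_mx t) *m param_mx t)).[z] =
                       \prod_i (z - (param_sv t ord0 i ^+ 2)%:C)].
  have horner_sv t z : (\prod_i ('X - ((param_sv t ord0 i ^+ 2)%:C)%:P)).[z] =
      \prod_i (z - (param_sv t ord0 i ^+ 2)%:C).
    by rewrite horner_prod; apply: eq_bigr => i _; rewrite hornerXsubC.
  apply/seteqP; split => t /= [s_ge0 charA].
    by split => [i _|z _]; [exact: s_ge0 | rewrite /= charA horner_sv].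
  split => [i|]; first exact: s_ge0.
  by apply: poly_horner_ext => z; rewrite (charA z) // horner_sv.
apply: closedI; apply: closed_bigI; [move=> i _ | move=> z _].
  exact: (continuous_closedP _).1 (@continuous_param_sv i) _ (@closed_ge R 0).
apply: closed_eq_ReIm; first exact: continuous_ReIm_char_poly_adjoint_mul.
apply: continuous_ReIm_prod => i; apply: continuous_ReImD.
  exact: continuous_ReIm_cst.
apply/continuous_ReImN/continuous_ReIm_real => t.
apply: (continuous_comp (g := fun x : R => x ^+ 2)).
  exact: continuous_param_sv.
exact: exprn_continuous.
Qed.

Lemma closed_common_zeros (S : set ('M[R[i]]_n -> R[i])) :
  (forall p, S p -> poly_fun p) ->
  closed [set t : P | forall p, S p -> p (param_mx t) = 0].
Proof.
move=> S_poly; rewrite (_ : [set t | _] = \bigcap_(p in S) [set t | p (param_mx t) = 0]).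
  apply: closed_bigI => p Sp; apply: closed_eq_ReIm.
    exact: continuous_ReIm_poly_fun (S_poly p Sp).
  exact: continuous_ReIm_cst.
by apply/seteqP; split => t /= t0 p; apply: t0.
Qed.

Lemma closed_param_sv_bounds (a b : 'I_n -> R) :
  closed [set t : P | forall i, a i <= param_sv t ord0 i <= b i].
Proof.
rewrite (_ : [set t | _] = \bigcap_i ([set t | a i <= param_sv t ord0 i] `&`
                                      [set t | param_sv t ord0 i <= b i])).
  apply: closed_bigI => i _; apply: closedI.
    exact: (continuous_closedP _).1 (@continuous_param_sv i) _ (@closed_ge R _).
  exact: (continuous_closedP _).1 (@continuous_param_sv i) _ (@closed_le R _).
by apply/seteqP; split => t /= bt i; [move=> _; apply/andP|apply/andP; apply: bt].
Qed.

Lemma compact_param_box (M : R) : compact [set t : P | forall k, `[-M, M] (t k)].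
Proof.
by apply: (@tychonoff _ _ (fun=> `[-M, M]%classic)) => _; apply: segment_compact.
Qed.

Lemma param_sqr_le_sv t k : singular_values (param_mx t) (param_sv t) ->
  t k ^+ 2 <= \sum_i param_sv t ord0 i ^+ 2.
Proof.
move=> svt; case: k => [[[i j] b]|i].
  apply: le_trans (singular_values_entry_bound i j svt).
  rewrite mxE /=; case: b; rewrite ?lerDl ?lerDr sqr_ge0 //.
rewrite (bigD1 i) //= mxE lerDl sumr_ge0 // => j _; exact: sqr_ge0.
Qed.

End parameters.

Lemma expR_window (R : realType) (a b e : R) : 0 < b ->
  (expR (a - e) <= b <= expR (a + e)) = (`|ln b - a| <= e).
Proof.
move=> b_gt0; rewrite -[b in LHS](@lnK R) ?posrE // !ler_expR ler_norml.
by apply/andP/andP => -[? ?]; split; lra.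
Qed.

Section quotient_distance.
Variables (R : realType) (n : nat).
Implicit Types x y : 'rV[R]_n.

Lemma quot_dist_lt_perm x y e : quot_dist x y < e ->
  exists sg : 'S_n, eucl_norm (perm_act sg x - y) < e.
Proof.
rewrite /quot_dist; elim/big_ind: _ => [xy_lt|a b IHa IHb|sg _ sg_lt]; last by exists sg.
- exists 1%g; rewrite (_ : perm_act 1 x = x) //.
  by apply/rowP => i; rewrite mxE perm1.
- by rewrite gt_min => /orP[/IHa|/IHb].
Qed.

Lemma coord_le_eucl_norm (v : 'rV[R]_n) i : `|v ord0 i| <= eucl_norm v.
Proof.
rewrite /eucl_norm -sqrtr_sqr ler_sqrt ?sumr_ge0 // => [|j _]; last exact: sqr_ge0.
by rewrite (bigD1 i) //= lerDl sumr_ge0 // => j _; apply: sqr_ge0.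
Qed.

End quotient_distance.

Section numerators.
Variables (R : realType) (n : nat) (I : set ('M[R[i]]_n -> R[i])).

(* Unlike the elements of I, their numerators are polynomial, so their common
   zero set is closed in the space of all matrices. *)
Definition ideal_numerators : set ('M[R[i]]_n -> R[i]) :=
  [set p | poly_fun p /\ exists f k, I f /\
           forall A, A \in unitmx -> f A = p A / \det A ^+ k].

Lemma zero_locusP A : (forall f, I f -> regular f) ->
  zero_locus I A <-> A \in unitmx /\ forall p, ideal_numerators p -> p A = 0.
Proof.
move=> I_regular; split => -[A_unit A_zero]; split => //.
  move=> p [_ [f [k [If fE]]]].
  have detA_neq0 : \det A ^+ k != 0 by rewrite expf_neq0 // -unitfE -unitmxE.
  by apply/(divIf detA_neq0); rewrite mul0r -fE // A_zero.
move=> f If; have [p [k [p_poly fE]]] := I_regular f If.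
by rewrite fE // A_zero ?mul0r //; split => //; exists f, k.
Qed.

End numerators.

Section amoeba_closure.
Variables (R : realType) (n : nat) (I : set ('M[R[i]]_n -> R[i])) (x : 'rV[R]_n).
Hypothesis I_regular : forall f, I f -> regular f.

Local Notation P := (prod_topology (fun _ : param_index n => R)).

Definition amoeba_approx (e : R) : set P :=
  [set t | [/\ singular_values (param_mx t) (param_sv t),
               forall p, ideal_numerators I p -> p (param_mx t) = 0 &
               forall i, expR (x ord0 i - e) <= param_sv t ord0 i <= expR (x ord0 i + e)]].

Lemma amoeba_approx_le e e' : e <= e' -> amoeba_approx e `<=` amoeba_approx e'.
Proof.
move=> le_ee' t [svt zt bt]; split => // i; have /andP[lo hi] := bt i.
by rewrite (le_trans _ lo) ?(le_trans hi) // ler_expR ?lerD2l ?lerN2.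
Qed.

Lemma closed_amoeba_approx e : closed (amoeba_approx e).
Proof.
have -> : amoeba_approx e = [set t | singular_values (param_mx t) (param_sv t)]
    `&` [set t | forall p, ideal_numerators I p -> p (param_mx t) = 0]
    `&` [set t | forall i, expR (x ord0 i - e) <= param_sv t ord0 i <= expR (x ord0 i + e)].
  by apply/seteqP; split => t /= => [[]|[[]]].
apply: closedI; last exact: closed_param_sv_bounds.
apply: closedI; first exact: closed_singular_values.
by apply: closed_common_zeros => p [].
Qed.

Lemma compact_amoeba_approx1 : compact (amoeba_approx 1).
Proof.
pose M := 1 + \sum_i expR (x ord0 i + 1) ^+ 2.
apply: (subclosed_compact (closed_amoeba_approx (e:=1)) (@compact_param_box R n M)).
move=> t [svt _ bt] k; rewrite /= in_itv /=.
have sv_le i : param_sv t ord0 i ^+ 2 <= expR (x ord0 i + 1) ^+ 2.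
  have /andP[lo hi] := bt i.
  by rewrite ler_sqr ?nnegrE ?(le_trans _ lo) ?expR_ge0.
have tk_le : t k ^+ 2 <= M.
  apply: le_trans (param_sqr_le_sv k svt) _.
  by rewrite (le_trans (ler_sum _ (fun i _ => sv_le i))) // lerDr.
have M_ge1 : 1 <= M by rewrite lerDl sumr_ge0 // => i _; apply: sqr_ge0.
by apply/andP; split; nra.
Qed.

Hypothesis x_adherent :
  forall e : R, 0 < e -> exists y, matrix_amoeba I y /\ quot_dist x y < e.

Lemma amoeba_approx_neq0 e : 0 < e -> amoeba_approx e !=set0.
Proof.
move=> e_gt0; have [y [[A [zA [s [svA y_ln]]]] xy_lt]] := x_adherent e_gt0.
have [sg sg_lt] := quot_dist_lt_perm xy_lt.
pose s' := \row_i s ord0 ((sg^-1)%g i).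
have svA' : singular_values A s' := singular_values_perm (sg^-1)%g svA.
have [A_unit A_zero] := (zero_locusP A I_regular).1 zA.
have s'_gt0 i : 0 < s' ord0 i.
  rewrite lt_def svA'.1 andbT.
  by move: A_unit; rewrite (unitmx_singular_values svA') => /forallP.
exists (param A s'); split; rewrite ?param_mxK ?param_svK // => i.
rewrite expR_window // distrC ltW //.
have := le_lt_trans (coord_le_eucl_norm _ ((sg^-1)%g i)) sg_lt.
by rewrite !mxE permKV y_ln.
Qed.

Lemma amoeba_approx_limit t :
  (forall e, 0 < e -> amoeba_approx e t) -> matrix_amoeba I x.
Proof.
move=> t_approx; have [svt _ bt1] := t_approx 1 ltr01.
have sv_gt0 i : 0 < param_sv t ord0 i.
  by have /andP[lo _] := bt1 i; apply: lt_le_trans lo; apply: expR_gt0.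
have ln_sv i : ln (param_sv t ord0 i) = x ord0 i.
  apply/eqP; rewrite -subr_eq0 -normr_le0; apply/ler_addgt0Pr => e e_gt0.
  by have [_ _ bt] := t_approx e e_gt0; rewrite add0r -expR_window.
exists (param_mx t); split; last by exists (param_sv t); split.
apply/zero_locusP => //; split; last by have [] := t_approx 1 ltr01.
by rewrite (unitmx_singular_values svt); apply/forallP => i; rewrite gt_eqF.
Qed.

End amoeba_closure.

Theorem mainTheorem3 (R : realType) (n : nat) (I : set ('M[R[i]]_n -> R[i])) :
  is_ideal I -> quot_closed (matrix_amoeba I).
Proof.
move=> [I_regular _ _ _] x x_adherent.
have [t t_approx] : exists t, forall e, 0 < e -> amoeba_approx I x e t.
  apply: nested_closed_compact_nonempty.
  - by move=> e; apply: amoeba_approx_neq0.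
  - by move=> e e' /andP[_]; apply: amoeba_approx_le.
  - by move=> e _; apply: closed_amoeba_approx.
  - exact: compact_amoeba_approx1.
exact: amoeba_approx_limit t_approx.
Qed.
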